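(* Let $(X,\mathcal T,P,\leq,\{\sigma_x:x\in X\})$ be a typed topological space with $X$ finite, and let $p\in P$. A set $D\subseteq X$ is $p$-closure connected if and only if for any two points $z,w\in D$ there exists a sequence $z=w_1,w_2,\dots,w_t=w$ with each $w_i\in D$ and $p\vdash tr(\{w_i\})\cap p\vdash tr(\{w_{i+1}\})\neq\emptyset$ for all $i=1,\dots,t-1$.
   Context: A typed topological space $(X,\mathcal T,P,\leq,\{\sigma_x:x\in X\})$ consists of a topological space $(X,\mathcal T)$, a partially ordered set $(P,\leq)$ of types, and for each $x\in X$ a partial function $\sigma_x:\{O\in\mathcal T:x\in O\}\to P$ such that for all $U,V$ in its domain, $\sigma_x(U)\leq\sigma_x(V)$ iff $U\subseteq V$. $U$ is a type-$p$ neighborhood of $x$ if $U$ is in the domain of $\sigma_x$ and $\sigma_x(U)=p$. $x$ is a $p$-accumulation point of $A$ if every type-$p$ neighborhood of $x$ meets $A$. $p\vdash CL_1(A)=A\cup\{p\text{-accumulation points of }A\}$, $p\vdash CL_n(A)=p\vdash CL_1(p\vdash CL_{n-1}(A))$, $p\vdash tr(A)=\bigcup_{n\ge1}p\vdash CL_n(A)$. Two sets $D,D'\subseteq X$ are $p$-closure disjoint if $p\vdash tr(D)\cap p\vdash tr(D')=\emptyset$. A set $D\subseteq X$ is $p$-closure connected if it cannot be partitioned into two non-empty subsets $E,E'$ that are $p$-closure disjoint. *)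

From HB Require Import structures.
From mathcomp Require Import all_boot all_order.
Set Implicit Arguments. Unset Strict Implicit. Unset Printing Implicit Defensive.
Import Order.Theory.
Local Open Scope order_scope.

Section TypedTop.
Variable X : finType.

Definition is_topology (T : pred {set X}) : Prop :=
  [/\ T set0, T setT,
      (forall F : {set {set X}}, (forall U, U \in F -> T U) ->
          T (\bigcup_(U in F) U))
    & (forall U V, T U -> T V -> T (U :&: V))].

Variables (d : Order.disp_t) (P : porderType d).

(* sigma x is a partial function (None = undefined) on the open
   neighbourhoods of x, with values in P, and order-reflecting/preserving. *)
Definition is_typing (T : pred {set X}) (sigma : X -> {set X} -> option P)
  : Prop :=
  (forall x U q, sigma x U = Some q -> T U /\ x \in U) /\
  (forall x U V p q, sigma x U = Some p -> sigma x V = Some q ->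
       (p <= q) = (U \subset V)).

Variable sigma : X -> {set X} -> option P.

Definition pCL1 (p : P) (A : X -> Prop) : X -> Prop :=
  fun x => A x \/ (forall U, sigma x U = Some p -> exists y, y \in U /\ A y).

(* p |- CL_n (A) for n >= 1: pCLn p n A = CL_{n+1} *)
Fixpoint pCLn (p : P) (n : nat) (A : {set X}) : X -> Prop :=
  match n with
  | 0 => pCL1 p (fun y => y \in A)
  | n'.+1 => pCL1 p (pCLn p n' A)
  end.

Definition ptr (p : P) (A : {set X}) (x : X) : Prop :=
  exists n, pCLn p n A x.

Definition closure_disjoint (p : P) (D D' : {set X}) : Prop :=
  ~ (exists x, ptr p D x /\ ptr p D' x).

Definition closure_connected (p : P) (D : {set X}) : Prop :=
  ~ (exists E E' : {set X},
        [/\ E != set0, E' != set0, E :|: E' = D, E :&: E' = set0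
          & closure_disjoint p E E']).

End TypedTop.

(* The type-p neighbourhood of a point is unique when it exists, since
   sigma_x reflects inclusion.  Hence a point of CL_1(A) either lies in A,
   has no type-p neighbourhood at all (and then lies in every CL_1), or lies
   in CL_1 of a single point of A; by induction p|-tr(S) is the union of the
   p|-tr({y}), y in S, for S nonempty.  So two blocks of a partition of D
   fail to be p-closure disjoint exactly when some point of one block is
   linked to some point of the other, and D is p-closure connected iff the
   linking relation is connected on D. *)
From HB Require Import structures.
From mathcomp Require Import all_boot all_order.
From mathcomp Require boolp.
Set Implicit Arguments.
Unset Strict Implicit.
Unset Printing Implicit Defensive.
Import Order.Theory.
Local Open Scope order_scope.

Section ClosureByPoints.
Variables (X : finType) (d : Order.disp_t) (P : porderType d)
  (sigma : X -> {set X} -> option P) (p : P).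
Local Open Scope nat_scope.

Lemma pCL1S (A B : X -> Prop) x :
  (forall y, A y -> B y) -> pCL1 sigma p A x -> pCL1 sigma p B x.
Proof.
move=> AB [Ax|Ameets]; first by left; apply: AB.
right=> U sxU; have [y [yU Ay]] := Ameets U sxU.
by exists y; split; last apply: AB.
Qed.

Lemma pCLnS n (A B : {set X}) x :
  A \subset B -> pCLn sigma p n A x -> pCLn sigma p n B x.
Proof.
by move=> /subsetP AB; elim: n x => [|n IHn] x /=; apply: pCL1S.
Qed.

Lemma ptr_set1_mono (A : {set X}) y x :
  y \in A -> ptr sigma p [set y] x -> ptr sigma p A x.
Proof. by move=> Ay [n yx]; exists n; apply: pCLnS yx; rewrite sub1set. Qed.

Definition linked (y y' : X) : Prop :=
  exists x, ptr sigma p [set y] x /\ ptr sigma p [set y'] x.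

Definition chain_connects (D : {set X}) (z w : X) : Prop :=
  exists (t : nat) (f : nat -> X),
    [/\ f 0 = z, f t = w, (forall i, i <= t -> f i \in D)
      & (forall i, i < t -> linked (f i) (f i.+1))].

Lemma chain_connects_refl (D : {set X}) z : z \in D -> chain_connects D z z.
Proof. by move=> Dz; exists 0, (fun=> z); split=> // i _. Qed.

Lemma chain_connects_rcons (D : {set X}) z y y' :
  chain_connects D z y -> y' \in D -> linked y y' -> chain_connects D z y'.
Proof.
move=> [t [f [f0 ft fD flinked]]] Dy' yy'.
exists t.+1, (fun i => if i == t.+1 then y' else f i); split=> /=.
- exact: f0.
- by rewrite eqxx.
- move=> i; rewrite leq_eqVlt => /orP[/eqP->|lti]; first by rewrite eqxx.
  by rewrite ltn_eqF // fD.
move=> i lti; rewrite ltn_eqF // eqSS.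
case: eqP => [->|/eqP neq_it]; first by rewrite ft.
by apply: flinked; rewrite ltn_neqAle neq_it -ltnS.
Qed.

Lemma chain_connects_closed (D E : {set X}) z w :
  (forall y y', y \in E -> y' \in D -> linked y y' -> y' \in E) ->
  z \in E -> chain_connects D z w -> w \in E.
Proof.
move=> Eclosed Ez [t [f [f0 <- fD flinked]]].
have: t <= t by [].
elim: {-2}t => [|i IHi] lei; first by rewrite f0.
exact: Eclosed (IHi (ltnW lei)) (fD _ lei) (flinked _ lei).
Qed.

Lemma chain_closure_connected (D : {set X}) :
  (forall z w, z \in D -> w \in D -> chain_connects D z w) ->
  closure_connected sigma p D.
Proof.
move=> chainD [E [E' [/set0Pn[z Ez] /set0Pn[w E'w] DEE' EE'0 disjEE']]].
have [DE DE'] : E \subset D /\ E' \subset D by rewrite -DEE' subsetUl subsetUr.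
suff Ew : w \in E by move: (in_set0 w); rewrite -EE'0 inE Ew E'w.
apply: chain_connects_closed Ez (chainD _ _ (subsetP DE _ Ez) (subsetP DE' _ E'w)).
move=> y y' Ey; rewrite -DEE' inE => /orP[//|E'y'] [x [yx y'x]].
case: disjEE'; exists x.
by split; [apply: ptr_set1_mono yx | apply: ptr_set1_mono y'x].
Qed.

Lemma typing_nbhd_uniq (T : pred {set X}) : is_typing T sigma ->
  forall x U V, sigma x U = Some p -> sigma x V = Some p -> U = V.
Proof.
move=> [_ sigma_le] x U V sxU sxV.
apply/eqP; rewrite eqEsubset -(sigma_le x U V p p) // -(sigma_le x V U p p) //.
by rewrite lexx.
Qed.

Hypothesis nbhd_uniq :
  forall x U V, sigma x U = Some p -> sigma x V = Some p -> U = V.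

Lemma pCL1P (A : X -> Prop) x : pCL1 sigma p A x ->
  [\/ A x, forall B, pCL1 sigma p B x
    | exists2 y, A y & forall B, B y -> pCL1 sigma p B x].
Proof.
move=> [Ax|Ameets]; first by constructor 1.
have [[U sxU]|no_nbhd] := boolp.EM (exists U, sigma x U = Some p).
  have [y [yU Ay]] := Ameets U sxU.
  constructor 3; exists y => // B By.
  by right=> V sxV; exists y; rewrite (nbhd_uniq sxV sxU).
by constructor 2 => B; right=> U sxU; case: no_nbhd; exists U.
Qed.

Lemma pCLn_set1 n (S : {set X}) y0 x : y0 \in S ->
  pCLn sigma p n S x -> exists2 y, y \in S & pCLn sigma p n [set y] x.
Proof.
move=> Sy0; elim: n x => [|n IHn] x /= /pCL1P[Sx|any|[y Sy y_x]].
- by exists x => //; left; rewrite inE.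
- by exists y0.
- by exists y => //; apply: y_x; rewrite inE.
- by have [y Sy yx] := IHn x Sx; exists y => //; left.
- by exists y0.
- by have [s Ss sy] := IHn y Sy; exists s => //; apply: y_x.
Qed.

Lemma ptr_set1P (S : {set X}) x : S != set0 ->
  ptr sigma p S x -> exists2 y, y \in S & ptr sigma p [set y] x.
Proof.
move=> /set0Pn[y0 Sy0] [n Sx].
by have [y Sy yx] := pCLn_set1 Sy0 Sx; exists y => //; exists n.
Qed.

Lemma closure_connected_chain (D : {set X}) :
  closure_connected sigma p D ->
  forall z w, z \in D -> w \in D -> chain_connects D z w.
Proof.
move=> connD z w Dz Dw; apply: boolp.contrapT => no_chain.
pose E := [set y in D | boolp.asbool (chain_connects D z y)].
have nzE : E != set0.
  by apply/set0Pn; exists z; rewrite inE Dz; apply/boolp.asboolP/chain_connects_refl.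
have nzE' : D :\: E != set0.
  by apply/set0Pn; exists w; rewrite !inE Dw andbT; apply/boolp.asboolP.
apply: connD; exists E, (D :\: E); split=> //.
- by apply/setP=> y; rewrite !inE; case: (y \in D); case: boolp.asbool.
- by apply/setP=> y; rewrite !inE; case: (y \in D); case: boolp.asbool.
move=> [x [Ex E'x]].
have [y Ey yx] := ptr_set1P nzE Ex.
have [y' E'y' y'x] := ptr_set1P nzE' E'x.
move: E'y' Ey; rewrite !inE => /andP[/negP notEy' Dy'] /andP[_ /boolp.asboolP zy].
apply: notEy'; rewrite Dy'; apply/boolp.asboolP.
by apply: chain_connects_rcons zy Dy' _; exists x.
Qed.

End ClosureByPoints.

Theorem lemma3p7 (X : finType) (T : pred {set X}) (hT : is_topology T)
  (d : Order.disp_t) (P : porderType d)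
  (sigma : X -> {set X} -> option P) (hsigma : is_typing T sigma)
  (p : P) (D : {set X}) :
  closure_connected sigma p D <->
  (forall z w, z \in D -> w \in D ->
     exists (t : nat) (f : nat -> X),
       [/\ f 0 = z, f t = w,
           (forall i, i <= t -> f i \in D)
         & (forall i, i < t ->
              exists x, ptr sigma p [set f i] x /\ ptr sigma p [set f i.+1] x)]).
Proof.
split; first exact/closure_connected_chain/(typing_nbhd_uniq hsigma).
exact: chain_closure_connected.
Qed.
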